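(* The class of subgraphs of the square grid is $(6,1)$-disjointness-expressing.
   Context: The square grid is the infinite graph with vertex set $\mathbb{Z}^2$ in which two points are adjacent iff their Euclidean distance is 1; a subgraph of the square grid means a finite graph isomorphic to a subgraph of it. A class $\mathcal{C}$ of graphs is $(s,\kappa)$-disjointness-expressing if for some constant $\alpha>0$, for every positive integer $N$ and every $X\subseteq\{1,\dots,N\}$ one can define graphs $L(X)$ and $R(X)$, each containing a labelled set $S$ of special vertices, such that for all $A,B\subseteq\{1,\dots,N\}$: (i) the graph $g(L(A),R(B))$ obtained by identifying each vertex of $S$ in $L(A)$ with the corresponding vertex of $S$ in $R(B)$ is connected and has at most $\alpha N^{1/\kappa}$ vertices; (ii) the subgraph of $g(L(A),R(B))$ induced by the closed neighborhood $N[S]$ is independent of $A,B$ (for all $A,A',B,B'$ there is an isomorphism between these induced subgraphs that is the identity on $S$) and has at most $s$ vertices; (iii) $g(L(A),R(B))\in\mathcal{C}$ if and only if $A\cap B=\emptyset$. *)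

From Stdlib Require Import Rdefinitions Raxioms Rpower.
From mathcomp Require Import all_boot all_order all_algebra.

Set Implicit Arguments.
Unset Strict Implicit.
Unset Printing Implicit Defensive.

Record graph := Graph { gV : finType; gadj : rel gV }.
Arguments gadj : clear implicits.

Definition simple_graph (G : graph) : Prop :=
  symmetric (gadj G) /\ irreflexive (gadj G).

Definition connected_graph (G : graph) : Prop :=
  forall x y : gV G, connect (gadj G) x y.

(* A graph G is a subgraph of the square grid iff it is isomorphic to a
   subgraph of the grid Z^2 (adjacent iff Euclidean distance 1), i.e. there
   is an injective vertex map into Z^2 sending edges to grid edges. *)
Definition grid_subgraph (G : graph) : Prop :=
  exists f : gV G -> int * int,
    injective f /\
    forall u v, gadj G u v ->
      (absz ((f u).1 - (f v).1)%R + absz ((f u).2 - (f v).2)%R = 1)%N.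

Record tgraph (k : nat) := TGraph { tg : graph; tlab : 'I_k -> gV (tg) }.
Arguments tg {k}.
Arguments tlab {k}.

Section Glue.
Variables (k : nat) (L R : tgraph k).

Definition glue_keep (v : gV (tg R)) : bool := v \notin codom (tlab R).

Definition glueV : finType :=
  (gV (tg L) + {v : gV (tg R) | glue_keep v})%type.

Definition glue_inL (u : gV (tg L)) : glueV := inl u.

(* the special vertex of R with label i is identified with the special vertex
   of L with label i *)
Definition glue_inR (v : gV (tg R)) : glueV :=
  (if v \in codom (tlab R) as b return (v \in codom (tlab R)) = b -> glueV
   then fun h => inl (tlab L (iinv h))
   else fun h => inr (exist _ v (negbT h))) (erefl _).

Definition glue_adj : rel glueV := fun x y =>
  [exists u, exists v, [&& glue_inL u == x, glue_inL v == y & gadj (tg L) u v]]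
  || [exists u, exists v, [&& glue_inR u == x, glue_inR v == y & gadj (tg R) u v]].

Definition glue_graph : graph := @Graph glueV glue_adj.

Definition glue : tgraph k :=
  @TGraph k glue_graph (fun i => glue_inL (tlab L i)).

End Glue.

Definition cnbhd k (G : tgraph k) : {set gV (tg G)} :=
  [set x | [exists i, (x == tlab G i) || gadj (tg G) (tlab G i) x]].

Definition nbhd_iso k (G1 G2 : tgraph k) : Prop :=
  exists f : gV (tg G1) -> gV (tg G2),
    [/\ {in cnbhd G1 &, injective f},
        f @: cnbhd G1 = cnbhd G2,
        (forall i, f (tlab G1 i) = tlab G2 i) &
        {in cnbhd G1 &, forall x y, gadj (tg G2) (f x) (f y) = gadj (tg G1) x y}].

(* (s,kappa)-disjointness-expressing classes; subsets of {1,...,N} are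
   represented as subsets of 'I_N = {0,...,N-1}. *)
Definition disjointness_expressing (C : graph -> Prop) (s kappa : nat) : Prop :=
  exists alpha : Rdefinitions.R, Rlt R0 alpha /\
  forall N : nat, (0 < N)%N ->
  exists (k : nat) (L Rg : {set 'I_N} -> tgraph k),
    (forall X, [/\ simple_graph (tg (L X)), injective (tlab (L X)),
                   simple_graph (tg (Rg X)) & injective (tlab (Rg X))]) /\
    forall A B : {set 'I_N},
      let G := glue (L A) (Rg B) in
      [/\ connected_graph (tg G),
          Rle (INR #|gV (tg G)|) (Rmult alpha (Rpower (INR N) (Rinv (INR kappa)))),
          (forall A' B', nbhd_iso G (glue (L A') (Rg B'))),
          (#|cnbhd G| <= s)%N &
          (C (tg G) <-> A :&: B = set0)].

(* L(X) and R(X) are both the same gadget, drawn in the grid: a ladder with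
   rows 0 and -1 and columns 0, ..., N+5, the two special vertices in row 1
   above columns 1 and N+4, and for every i < N a tooth attached to column i+3,
   above the ladder (row 1) if i \in X and below it (row -2) otherwise.
   Reflecting the drawing of R(B) in row 1 keeps the special vertices in place,
   and gives a grid drawing of g(L(A), R(B)) unless some column carries an
   upper tooth on both sides, i.e. unless A and B meet.
   Conversely, in any grid drawing each 4-cycle of a ladder is a unit square
   and injectivity forbids folding back, so both ladders are drawn straight.
   A vertex off the ladder adjacent to an inner top vertex is then forced to
   the far side of the rung, so the special vertices and the upper teeth of
   one side lie on one arithmetic progression.  The two shared special
   vertices fix that progression, hence for i \in A :&: B the two teeth i
   would be drawn on the same grid point. *)

From Stdlib Require Import RIneq Rpower.
From mathcomp Require Import all_boot all_order all_algebra.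
From mathcomp Require Import zify ring.

Set Implicit Arguments.
Unset Strict Implicit.
Unset Printing Implicit Defensive.
Import GRing.Theory Num.Theory.
Local Open Scope ring_scope.

Local Notation point := (int * int)%type.

Definition norm1 (p : point) : nat := (absz p.1 + absz p.2)%N.
Definition unit_step (p : point) : bool := norm1 p == 1%N.
Definition grid_adj (p q : point) : bool := unit_step (p - q).
Definition dot (p q : point) : int := p.1 * q.1 + p.2 * q.2.

Lemma grid_adjE (p q : point) :
  grid_adj p q = (absz (p.1 - q.1) + absz (p.2 - q.2) == 1)%N.
Proof. by []. Qed.

Lemma unit_stepN (p : point) : unit_step (- p) = unit_step p.
Proof. by rewrite /unit_step /norm1 /= !abszN. Qed.

Lemma grid_adjC (p q : point) : grid_adj p q = grid_adj q p.
Proof. by rewrite /grid_adj -unit_stepN opprB. Qed.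

Lemma unit_step_enum (p : point) :
  unit_step p -> p \in [:: (1, 0); (-1, 0); (0, 1); (0, -1)].
Proof.
case: p => x y /eqP h; rewrite !inE.
have : (x = 1 /\ y = 0) \/ (x = -1 /\ y = 0) \/ (x = 0 /\ y = 1) \/ (x = 0 /\ y = -1).
  by rewrite /norm1 /= in h; lia.
by case=> [|[|[]]] [-> ->]; rewrite eqxx ?orbT.
Qed.

Lemma grid_four_cycle_steps (x y z : point) :
  unit_step x -> unit_step y -> unit_step z -> unit_step (x + y + z) ->
  x + y != 0 -> y + z != 0 -> z = - x /\ dot x y = 0.
Proof.
by move=> /unit_step_enum + /unit_step_enum + /unit_step_enum; rewrite !inE;
  move=> /or4P[]/eqP-> /or4P[]/eqP-> /or4P[]/eqP->.
Qed.

Lemma unit_perp_cases (u r a : point) :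
  unit_step u -> unit_step r -> dot u r = 0 -> unit_step a -> dot a r = 0 ->
  a = u \/ a = - u.
Proof.
move=> /unit_step_enum + /unit_step_enum + + /unit_step_enum; rewrite !inE.
by move=> /or4P[]/eqP-> /or4P[]/eqP-> // _ /or4P[]/eqP->; auto.
Qed.

Lemma unit_perp_remaining (u r a : point) :
  unit_step u -> unit_step r -> dot u r = 0 -> unit_step a ->
  a != u -> a != - u -> a != r -> a = - r.
Proof.
move=> /unit_step_enum + /unit_step_enum + + /unit_step_enum; rewrite !inE.
by move=> /or4P[]/eqP-> /or4P[]/eqP-> // _ /or4P[]/eqP->.
Qed.

Lemma grid_four_cycle (a b c d : point) :
  grid_adj b a -> grid_adj c b -> grid_adj d c -> grid_adj a d ->
  c != a -> d != b -> d - a = c - b /\ dot (b - a) (c - b) = 0.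
Proof.
move=> ab bc cd da ca db.
have [] := @grid_four_cycle_steps (b - a) (c - b) (d - c) ab bc cd.
- by rewrite -unit_stepN; have -> : - (b - a + (c - b) + (d - c)) = a - d by ring.
- by rewrite (_ : b - a + (c - b) = c - a) ?subr_eq0 //; ring.
- by rewrite (_ : c - b + (d - c) = d - b) ?subr_eq0 //; ring.
move=> zx ->; split=> //.
by rewrite -[d](subrK c) zx; ring.
Qed.

Lemma grid_pendant (p u r z : point) :
  unit_step u -> unit_step r -> dot u r = 0 -> grid_adj z p ->
  z != p - u -> z != p + u -> z != p + r -> z = p - r.
Proof.
move=> hu hr hur hz zu zu' zr.
have step (v : point) : (z - p == v) = (z == p + v).
  by apply/eqP/eqP => [<-|->]; ring.
suff : z - p == - r by rewrite step => /eqP.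
by apply/eqP; apply: (unit_perp_remaining hu hr hur hz); rewrite step.
Qed.

Lemma natmul_point_inj (n : nat) (u u' : point) :
  (0 < n)%N -> u *+ n = u' *+ n -> u = u'.
Proof.
move=> n0 e; have /eqP e1 := congr1 fst e; have /eqP e2 := congr1 snd e.
move: e1 e2; rewrite !raddfMn /= !eqrMn2r (gtn_eqF n0) /=; clear e.
by case: u u' => [a b] [a' b'] /= /eqP-> /eqP->.
Qed.

Lemma progression_eq (o o' u u' : point) (j k : nat) : (j < k)%N ->
  o + u *+ j = o' + u' *+ j -> o + u *+ k = o' + u' *+ k -> o = o' /\ u = u'.
Proof.
move=> jk ej ek.
have uu' : u = u'.
  apply: (@natmul_point_inj (k - j)); first by rewrite subn_gt0.
  rewrite !mulrnBr ?(ltnW jk) //.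
  have sub (a b c : point) : a + b - (a + c) = b - c by ring.
  by rewrite -(sub o (u *+ k)) -(sub o' (u' *+ k)) ek ej.
by split=> //; apply: (addIr (u *+ j)); rewrite ej uu'.
Qed.

Section StraightLadder.

Variables (top bot : nat -> point) (m : nat).
Hypotheses (m_gt0 : (0 < m)%N)
  (top_adj : forall c, (c < m)%N -> grid_adj (top c.+1) (top c))
  (bot_adj : forall c, (c < m)%N -> grid_adj (bot c.+1) (bot c))
  (rung_adj : forall c, (c <= m)%N -> grid_adj (bot c) (top c))
  (diag_neq : forall c, (c < m)%N -> bot c.+1 != top c /\ bot c != top c.+1)
  (top_neq : forall c, (c.+1 < m)%N -> top c.+2 != top c).

Let u := top 1 - top 0.
Let r := bot 0 - top 0.

Let ladder_square c : (c < m)%N ->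
  bot c - top c = bot c.+1 - top c.+1 /\
  dot (top c.+1 - top c) (bot c.+1 - top c.+1) = 0.
Proof.
move=> cm; have [ne1 ne2] := diag_neq cm.
apply: grid_four_cycle => //.
- exact: top_adj cm.
- exact: rung_adj cm.
- by rewrite grid_adjC bot_adj.
- by rewrite grid_adjC rung_adj // ltnW.
Qed.

Let rung_const c : (c <= m)%N -> bot c - top c = r.
Proof. by elim: c => // c IH cm; rewrite -(ladder_square cm).1 IH // ltnW. Qed.

Let unit_u : unit_step u.
Proof. exact: top_adj. Qed.

Let unit_r : unit_step r.
Proof. exact: rung_adj. Qed.

Let step_perp c : (c < m)%N -> dot (top c.+1 - top c) r = 0.
Proof. by move=> cm; rewrite -(rung_const cm) (ladder_square cm).2. Qed.

Let step_const c : (c < m)%N -> top c.+1 - top c = u.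
Proof.
elim: c => // c IH cm; have IHc := IH (ltnW cm).
have [] := @unit_perp_cases u r (top c.+2 - top c.+1) unit_u unit_r.
- by rewrite -IHc step_perp // ltnW.
- exact: top_adj.
- exact: step_perp.
- done.
- rewrite -IHc => e; suff : top c.+2 = top c by move/eqP; rewrite (negbTE (top_neq cm)).
  by rewrite -[top c.+2](subrK (top c.+1)) e; ring.
Qed.

Lemma ladder_straight :
  exists u r : point, [/\ unit_step u, unit_step r, dot u r = 0,
    forall c, (c <= m)%N -> top c = top 0 + u *+ c &
    forall c, (c <= m)%N -> bot c = top c + r].
Proof.
exists u, r; split=> //.
- exact: step_perp m_gt0.
- elim=> [|c IH] cm; first by rewrite addr0.
  by rewrite mulrSr addrA -IH ?(ltnW cm) // -(step_const cm) addrC subrK.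
- by move=> c cm; rewrite -(rung_const cm) addrC subrK.
Qed.

End StraightLadder.

Lemma connect_homo (T T' : finType) (e : rel T) (e' : rel T') (h : T -> T') :
  {homo h : x y / e x y >-> e' x y} ->
  forall x y, connect e x y -> connect e' (h x) (h y).
Proof.
move=> hom x _ /connectP [p ep ->]; apply/connectP.
by exists (map h p); [exact: homo_path ep | rewrite last_map].
Qed.

Section GlueFacts.

Variables (k : nat) (L R : tgraph k).

Lemma glue_inR_kept (v : gV (tg R)) (h : glue_keep v) :
  glue_inR L v = inr (exist _ v h).
Proof.
rewrite /glue_inR; move: (erefl _); rewrite {2 3}(negbTE h) => e /=.
by congr (inr (exist _ v _)); apply: bool_irrelevance.
Qed.

Lemma glue_inR_tlab : injective (tlab R) ->
  forall j, glue_inR L (tlab R j) = inl (tlab L j).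
Proof.
move=> injR j; rewrite /glue_inR; move: (erefl _); rewrite {2 3}codom_f => e /=.
by rewrite (injR _ _ (f_iinv e)).
Qed.

Lemma glue_inR_cases (x : glueV L R) :
  (exists u, x = inl u) \/ (exists v, x = glue_inR L v).
Proof.
case: x => [u|[v h]]; first by left; exists u.
by right; exists v; rewrite glue_inR_kept.
Qed.

Lemma glue_adj_inL u v : gadj (tg L) u v -> gadj (tg (glue L R)) (inl u) (inl v).
Proof.
by move=> uv; apply/orP; left; apply/existsP; exists u; apply/existsP; exists v;
  rewrite !eqxx.
Qed.

Lemma glue_adj_inR u v :
  gadj (tg R) u v -> gadj (tg (glue L R)) (glue_inR L u) (glue_inR L v).
Proof.
by move=> uv; apply/orP; right; apply/existsP; exists u; apply/existsP; exists v;
  rewrite !eqxx.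
Qed.

Hypotheses (injL : injective (tlab L)) (injR : injective (tlab R)).

Lemma glue_inR_inj : injective (glue_inR L (R:=R)).
Proof.
move=> u v.
have [hu|/negPn/codomP[i ->]] := boolP (glue_keep u);
have [hv|/negPn/codomP[j ->]] := boolP (glue_keep v).
- by rewrite (glue_inR_kept hu) (glue_inR_kept hv) => -[].
- by rewrite (glue_inR_kept hu) glue_inR_tlab.
- by rewrite (glue_inR_kept hv) glue_inR_tlab.
- by rewrite !glue_inR_tlab // => -[] /injL ->.
Qed.

Lemma glue_connected : (0 < k)%N ->
  connected_graph (tg L) -> connected_graph (tg R) -> connected_graph (tg (glue L R)).
Proof.
move=> k0 connL connR; pose s : gV (tg (glue L R)) := inl (tlab L (Ordinal k0)).
have hub x : connect (gadj (tg (glue L R))) x s /\ connect (gadj (tg (glue L R))) s x.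
  have [[u ->]|[v ->]] := glue_inR_cases x.
    by split; apply: (connect_homo (@glue_adj_inL)).
  by rewrite /s -(glue_inR_tlab injR); split; apply: (connect_homo (@glue_adj_inR)).
by move=> x y; apply: connect_trans (hub x).1 (hub y).2.
Qed.

End GlueFacts.

Arguments glue_adj_inL {k L R u v}.
Arguments glue_adj_inR {k L R u v}.

Section Gadget.

Variable N : nat.
Implicit Types (X : {set 'I_N}) (i : 'I_N) (j : 'I_2).

Definition gadget_vertex : finType := ('I_N.+4.+2 * bool + ('I_N + 'I_2))%type.

Definition ladder_vertex (c : nat) (b : bool) : gadget_vertex := inl (inord c, b).
Definition tooth i : gadget_vertex := inr (inl i).
Definition terminal j : gadget_vertex := inr (inr j).
Definition anchor j : nat := if j == ord0 then 1 else N.+4.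
Definition anchor_vertex j : gadget_vertex := ladder_vertex (anchor j) true.

Definition gadget_pos X (v : gadget_vertex) : point :=
  match v with
  | inl (c, b) => (c%:Z, if b then 0 else -1)
  | inr (inl i) => ((i + 3)%N%:Z, if i \in X then 1 else -2)
  | inr (inr j) => ((anchor j)%:Z, 1)
  end.

Definition gadget_adj X : rel gadget_vertex :=
  fun u v => grid_adj (gadget_pos X u) (gadget_pos X v).

Definition gadget X : tgraph 2 := @TGraph 2 (@Graph gadget_vertex (gadget_adj X)) terminal.

Lemma ladder_vertex_eq (c c' : nat) (b b' : bool) : (c <= N + 5)%N -> (c' <= N + 5)%N ->
  (ladder_vertex c b == ladder_vertex c' b') = (c == c') && (b == b').
Proof.
move=> cN c'N; rewrite /ladder_vertex (inj_eq (@inl_inj _ _)) xpair_eqE.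
by rewrite -val_eqE /= !inordK //; lia.
Qed.

Lemma gadget_adj_ladder X c b : (c < N + 5)%N ->
  gadget_adj X (ladder_vertex c.+1 b) (ladder_vertex c b).
Proof. by move=> cN; rewrite /gadget_adj grid_adjE /= !inordK; case: b; lia. Qed.

Lemma gadget_adj_rung X c : (c <= N + 5)%N ->
  gadget_adj X (ladder_vertex c false) (ladder_vertex c true).
Proof. by move=> cN; rewrite /gadget_adj grid_adjE /= !inordK; lia. Qed.

Lemma gadget_adj_terminal X j : gadget_adj X (terminal j) (anchor_vertex j).
Proof.
by rewrite /gadget_adj grid_adjE /= /anchor; case: ifP => _; rewrite inordK; lia.
Qed.

Lemma gadget_adj_tooth X i :
  gadget_adj X (tooth i) (ladder_vertex (i + 3) (i \in X)).
Proof.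
have iN := ltn_ord i.
by rewrite /gadget_adj grid_adjE /=; case: (i \in X); rewrite inordK; lia.
Qed.

Section GadgetEmbedding.

Variables (X : {set 'I_N}) (g : gadget_vertex -> point).
Hypotheses (g_inj : injective g)
  (g_hom : {homo g : u v / gadget_adj X u v >-> grid_adj u v}).

Let top c := g (ladder_vertex c true).
Let bot c := g (ladder_vertex c false).

Let ladder_neq c b c' b' : (c <= N + 5)%N -> (c' <= N + 5)%N ->
  (c != c') || (b != b') -> g (ladder_vertex c b) != g (ladder_vertex c' b').
Proof. by move=> cN c'N; rewrite (inj_eq g_inj) ladder_vertex_eq // negb_and. Qed.

Lemma gadget_ladder_straight :
  exists u r : point, [/\ unit_step u, unit_step r, dot u r = 0,
    forall c, (c <= N + 5)%N -> top c = top 0 + u *+ c &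
    forall c, (c <= N + 5)%N -> bot c = top c + r].
Proof.
apply: ladder_straight.
- by rewrite addn_gt0 orbT.
- by move=> c cN; apply: g_hom; apply: gadget_adj_ladder.
- by move=> c cN; apply: g_hom; apply: gadget_adj_ladder.
- by move=> c cN; apply: g_hom; apply: gadget_adj_rung.
- by move=> c cN; rewrite !ladder_neq ?orbT //; apply: ltnW.
- by move=> c cN; rewrite ladder_neq ?gtn_eqF //; lia.
Qed.

Lemma gadget_pendants : exists o u : point, forall d w, (d.+2 <= N + 5)%N ->
  gadget_adj X (inr w) (ladder_vertex d.+1 true) -> g (inr w) = o + u *+ d.+1.
Proof.
have [u [r [unit_u unit_r ur0 topE botE]]] := gadget_ladder_straight.
exists (top 0 - r), u => d w dN wd.
have topS c : (c < N + 5)%N -> top c.+1 = top c + u.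
  by move=> cN; rewrite (topE c.+1) // (topE c) ?mulrSr ?addrA // ltnW.
rewrite (_ : _ + _ = top d.+1 - r); last by rewrite (topE d.+1) ?(ltnW dN) //; ring.
apply: (@grid_pendant (top d.+1) u r) => //; first exact: g_hom.
- by rewrite topS ?addrK ?(inj_eq g_inj) // ltnW.
- by rewrite -topS ?(inj_eq g_inj).
- by rewrite -botE ?(inj_eq g_inj) // ltnW.
Qed.

Lemma gadget_rigid : exists o u : point,
  [/\ g (terminal ord0) = o + u *+ 1, g (terminal ord_max) = o + u *+ N.+4 &
      forall i, i \in X -> g (tooth i) = o + u *+ (i + 3)].
Proof.
have [o [u pendant]] := gadget_pendants; exists o, u; split.
- by apply: (pendant 0%N); [lia | exact: gadget_adj_terminal].
- by apply: (pendant N.+3); [lia | exact: gadget_adj_terminal].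
- move=> i iX; have := gadget_adj_tooth X i; rewrite iX addn3 => /pendant -> //.
  by rewrite -addn3 addnS; have := ltn_ord i; lia.
Qed.

End GadgetEmbedding.

Lemma gadget_pos_inj X : injective (gadget_pos X).
Proof.
have anchor_inj : injective anchor.
  by move=> [[|[|j]] hj] [[|[|j']] hj'] //=; rewrite /anchor /= => e;
    apply/val_inj => /=; lia.
move=> x y e; move: (congr1 fst e) (congr1 snd e) => {e}.
case: x y => [[c b]|[i|j]] [[c' b']|[i'|j']] /= e1 e2.
- by congr (inl (_, _)); [apply/val_inj => /=; lia | move: e2; case: b b' => -[]].
- by move: e2; case: b; case: ifP.
- by move: e2; case: b.
- by move: e2; case: b'; case: ifP.
- by congr (inr (inl _)); apply/val_inj => /=; lia.
- by move: e1; rewrite /anchor; have := ltn_ord i; case: ifP => _; lia.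
- by move: e2; case: b'.
- by move: e1; rewrite /anchor; have := ltn_ord i'; case: ifP => _; lia.
- by congr (inr (inr _)); apply: anchor_inj; lia.
Qed.

Lemma gadget_simple X : simple_graph (tg (gadget X)).
Proof.
by split=> [u v | u]; [exact: grid_adjC | rewrite /= /gadget_adj /grid_adj subrr].
Qed.

Lemma gadget_tlab_inj X : injective (tlab (gadget X)).
Proof. by move=> j j' []. Qed.

Lemma gadget_terminal_adj X j v :
  gadget_adj X (terminal j) v -> v = anchor_vertex j.
Proof.
rewrite /gadget_adj grid_adjE /anchor_vertex /= /anchor; case: v => [[c b]|[i|j']] /=.
- by case: b; case: ifP => _ /eqP h; try lia;
    rewrite -[c]inord_val; apply/eqP; rewrite ladder_vertex_eq ?eqxx ?andbT; lia.
- by have := ltn_ord i; case: ifP => _; case: ifP => _ /eqP; lia.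
- by case: j j' => [[|[|j]] hj] [[|[|j']] hj'] //=; rewrite /anchor /= => /eqP; lia.
Qed.

Lemma gadget_connected X : connected_graph (tg (gadget X)).
Proof.
pose root := ladder_vertex 0 true.
suff to_root v : connect (gadget_adj X) v root.
  move=> u v; apply: connect_trans (to_root u) _.
  by rewrite (sym_connect_sym (gadget_simple X).1); exact: to_root.
have ladder_to_root c b : (c <= N + 5)%N -> connect (gadget_adj X) (ladder_vertex c b) root.
  move=> cN; have top_to_root : connect (gadget_adj X) (ladder_vertex c true) root.
    elim: c cN => [|c IH] cN; first exact: connect0.
    by apply: connect_trans (IH (ltnW cN)); apply: connect1; apply: gadget_adj_ladder.
  case: b => //; apply: connect_trans top_to_root.
  by apply: connect1; apply: gadget_adj_rung.
case: v => [[c b]|[i|j]].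
- by rewrite -[c]inord_val; apply: ladder_to_root; have := ltn_ord c; lia.
- apply: connect_trans (connect1 (gadget_adj_tooth X i)) _.
  by apply: ladder_to_root; have := ltn_ord i; lia.
- apply: connect_trans (connect1 (gadget_adj_terminal X j)) _.
  by apply: ladder_to_root; rewrite /anchor; case: ifP => _; lia.
Qed.

Definition is_tooth (v : gadget_vertex) : bool := if v is inr (inl _) then true else false.

Lemma gadget_adj_off_teeth X X' u v : ~~ is_tooth u -> ~~ is_tooth v ->
  gadget_adj X u v = gadget_adj X' u v.
Proof. by case: u v => [[c b]|[i|j]] [[c' b']|[i'|j']]. Qed.

End Gadget.

Arguments ladder_vertex {N} c b.
Arguments terminal {N} j.
Arguments anchor {N} j.
Arguments anchor_vertex {N} j.

Section GluedGadgets.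

Variables (N : nat) (A B : {set 'I_N}).

Local Notation glued := (glue (gadget A) (gadget B)).
Local Notation inR := (glue_inR (gadget A) (R:=gadget B)).

Lemma glued_inR_inj : injective inR.
Proof. exact: glue_inR_inj (gadget_tlab_inj (X:=A)) (gadget_tlab_inj (X:=B)). Qed.

Lemma glued_inR_terminal j : inR (terminal j) = inl (terminal j).
Proof. exact: (glue_inR_tlab _ (gadget_tlab_inj (X:=B))). Qed.

Lemma glued_tooth_kept i : glue_keep (R:=gadget B) (tooth i).
Proof. by apply/codomP => -[]. Qed.

Lemma glued_grid_disjoint : grid_subgraph (tg glued) -> A :&: B = set0.
Proof.
case=> f [finj fadj]; have fhom x y : gadj (tg glued) x y -> grid_adj (f x) (f y).
  by move/fadj/eqP.
have homL : {homo f \o inl : u v / gadget_adj A u v >-> grid_adj u v}.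
  by move=> u v uv; apply: fhom; apply: glue_adj_inL.
have homR : {homo f \o inR : u v / gadget_adj B u v >-> grid_adj u v}.
  by move=> u v uv; apply: fhom; apply: glue_adj_inR.
have [oL [uL [sL0 sL1 teethL]]] := gadget_rigid (inj_comp finj (@inl_inj _ _)) homL.
have [oR [uR [sR0 sR1 teethR]]] :=
  gadget_rigid (inj_comp finj glued_inR_inj) homR.
have terminalR j : (f \o inR) (terminal j) = (f \o inl) (terminal j).
  by rewrite /= glued_inR_terminal.
have [eo eu] : oL = oR /\ uL = uR.
  apply: (@progression_eq _ _ _ _ 1 N.+4) => //.
    by rewrite -sL0 -sR0 terminalR.
  by rewrite -sL1 -sR1 terminalR.
apply/setP => i; rewrite inE in_set0; apply/andP => -[iA iB].
have := teethL i iA; rewrite eo eu -(teethR i iB) => /finj.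
by rewrite (glue_inR_kept _ (glued_tooth_kept i)).
Qed.

Definition mirror (p : point) : point := (p.1, 2 - p.2).

Definition glued_pos (x : gV (tg glued)) : point :=
  match x with
  | inl u => gadget_pos A u
  | inr v => mirror (gadget_pos B (val v))
  end.

Lemma glued_pos_inR v : glued_pos (inR v) = mirror (gadget_pos B v).
Proof.
have [kept|/negPn/codomP[j ->]] := boolP (glue_keep v).
  by rewrite (glue_inR_kept _ kept).
by rewrite glued_inR_terminal /= /mirror /=; congr pair; lia.
Qed.

Lemma glued_pos_adj x y : gadj (tg glued) x y -> grid_adj (glued_pos x) (glued_pos y).
Proof.
case/orP => /existsP [u /existsP [v /and3P [/eqP <- /eqP <- uv]]] //.
move: uv => /=; rewrite /gadget_adj !grid_adjE !glued_pos_inR /=.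
by case: (gadget_pos B u) (gadget_pos B v) => [a b] [c d] /=; lia.
Qed.

Lemma gadget_pos_mirror_cross u v : glue_keep (R:=gadget B) v ->
  gadget_pos A u = mirror (gadget_pos B v) -> exists i, i \in A :&: B.
Proof.
move=> kept e; move: (congr1 fst e) (congr1 snd e) => {e}.
case: u v kept => [[c b]|[i|j]] [[c' b']|[i'|j']] kept /= e1 e2;
  first [by case/negP: kept; exact: codom_f | clear kept].
- by move: e2; case: b; case: b'; lia.
- by move: e2; case: b; case: ifP => _; lia.
- by move: e2; case: ifP => _; case: b'; lia.
- move: e2; case: ifP => iA; case: ifP => iB; try lia; move=> _.
  have ii' : i = i' by apply/val_inj => /=; lia.
  by exists i; rewrite inE iA ii' iB.
- by move: e2; case: b'; lia.
- by move: e1; rewrite /anchor; have := ltn_ord i'; case: ifP => _; lia.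
Qed.

Lemma glued_pos_inj : A :&: B = set0 -> injective glued_pos.
Proof.
move=> AB; have no_cross u v (kept : glue_keep (R:=gadget B) v) :
    gadget_pos A u != mirror (gadget_pos B v).
  by apply/eqP => /(gadget_pos_mirror_cross kept) [i]; rewrite AB inE.
have mirror_inj : injective mirror by move=> [a b] [c d] [-> e]; congr pair; lia.
case=> [u|[v kv]] [u'|[v' kv']] /=.
- by move/gadget_pos_inj->.
- by move/eqP; rewrite (negbTE (no_cross _ _ kv')).
- by move/esym/eqP; rewrite (negbTE (no_cross _ _ kv)).
- move/mirror_inj/gadget_pos_inj => vv'; subst v'.
  by congr (inr (exist _ v _)); exact: bool_irrelevance.
Qed.

Lemma glued_grid_of_disjoint : A :&: B = set0 -> grid_subgraph (tg glued).
Proof.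
move=> AB; exists glued_pos; split; first exact: glued_pos_inj.
by move=> x y /glued_pos_adj /eqP.
Qed.

Definition glued_nbhd : {set gV (tg glued)} :=
  [set inl (terminal j) | j in 'I_2] :|: [set inl (anchor_vertex j) | j in 'I_2]
  :|: [set inR (anchor_vertex j) | j in 'I_2].

Lemma cnbhd_glued : cnbhd glued = glued_nbhd.
Proof.
apply/setP => x; rewrite /cnbhd !inE /= /glue_inL.
apply/existsP/idP => [[j /orP[/eqP -> | ]] | ].
- by rewrite imset_f.
- case/orP => /existsP [u /existsP [v /and3P [/eqP eu /eqP <- uv]]].
    by case: eu uv => -> /gadget_terminal_adj ->; rewrite /glue_inL imset_f ?orbT.
  move: eu uv; rewrite -glued_inR_terminal => /glued_inR_inj -> /gadget_terminal_adj ->.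
  by apply/orP; right; apply/imsetP; exists j.
case/orP => [/orP[]|] /imsetP [j _ ->]; exists j.
- by rewrite eqxx.
- by apply/orP; right; apply: glue_adj_inL; exact: gadget_adj_terminal.
- apply/orP; right; rewrite -glued_inR_terminal.
  by apply: glue_adj_inR; exact: gadget_adj_terminal.
Qed.

Lemma card_glued_nbhd : (#|glued_nbhd| <= 6)%N.
Proof.
have cardU (T : finType) (X Y : {set T}) : (#|X :|: Y| <= #|X| + #|Y|)%N.
  exact: (leq_card_setU X Y).1.
have card_img (f : 'I_2 -> gV (tg glued)) : (#|[set f j | j in 'I_2]| <= 2)%N.
  by apply: leq_trans (leq_imset_card _ _) _; rewrite card_ord.
apply: leq_trans (cardU _ _ _) _; rewrite -[6%N]/(2 + 2 + 2)%N.
by apply: leq_add (card_img _); apply: leq_trans (cardU _ _ _) _; apply: leq_add.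
Qed.

Definition glued_base (x : gV (tg glued)) : gadget_vertex N :=
  match x with inl u => u | inr v => val v end.

Lemma glued_base_inR v : glued_base (inR v) = v.
Proof.
have [kept|/negPn/codomP[j ->]] := boolP (glue_keep v).
  by rewrite (glue_inR_kept _ kept).
by rewrite glued_inR_terminal.
Qed.

Lemma glued_nbhd_off_teeth x : x \in glued_nbhd -> ~~ is_tooth (glued_base x).
Proof. by rewrite !inE => /orP[/orP[]|] /imsetP[j _ ->]; rewrite ?glued_base_inR. Qed.

Lemma card_glued : (#|gV (tg glued)| <= 6 * N + 28)%N.
Proof.
have cardV : #|gadget_vertex N| = (3 * N + 14)%N.
  by rewrite !card_sum card_prod !card_ord card_bool; lia.
rewrite /= card_sum card_sig; apply: leq_trans (leq_add (leqnn _) (max_card _)) _.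
by rewrite cardV; lia.
Qed.

End GluedGadgets.

Lemma glued_adj_off_teeth N (A B A' B' : {set 'I_N})
    (x y : gV (tg (glue (gadget A) (gadget B)))) :
  ~~ is_tooth (glued_base x) -> ~~ is_tooth (glued_base y) ->
  gadj (tg (glue (gadget A') (gadget B'))) x y = gadj (tg (glue (gadget A) (gadget B))) x y.
Proof.
move=> tx ty; congr (_ || _); apply: eq_existsb => u; apply: eq_existsb => v.
  case: eqP => // ex; case: eqP => // ey; apply: gadget_adj_off_teeth.
    by move: tx; rewrite -ex.
  by move: ty; rewrite -ey.
case: eqP => // ex; case: eqP => // ey; apply: gadget_adj_off_teeth.
  by rewrite -[u](@glued_base_inR N A' B') ex.
by rewrite -[v](@glued_base_inR N A' B') ey.
Qed.

Lemma glued_nbhd_iso N (A B A' B' : {set 'I_N}) :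
  nbhd_iso (glue (gadget A) (gadget B)) (glue (gadget A') (gadget B')).
Proof.
exists id; split=> //.
- by rewrite imset_id !cnbhd_glued.
- move=> x y; rewrite cnbhd_glued => /glued_nbhd_off_teeth tx /glued_nbhd_off_teeth ty.
  exact: glued_adj_off_teeth.
Qed.

Theorem theorem5p5 : disjointness_expressing grid_subgraph 6 1.
Proof.
exists (INR 34); split; first by apply: lt_0_INR; apply/ltP.
move=> N N0; exists 2%N, (@gadget N), (@gadget N); split.
  by move=> X; split; try exact: gadget_simple; exact: gadget_tlab_inj.
move=> A B; cbv zeta; split.
- by apply: (glue_connected (gadget_tlab_inj (X:=B)) isT); exact: gadget_connected.
- rewrite [INR 1]/= Rinv_1 Rpower_1; last exact/lt_0_INR/ltP.
  by rewrite -mult_INR; apply/le_INR/leP; apply: leq_trans (card_glued A B) _; lia.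
- by move=> A' B'; exact: glued_nbhd_iso.
- by rewrite cnbhd_glued card_glued_nbhd.
- split; [exact: glued_grid_disjoint | exact: glued_grid_of_disjoint].
Qed.
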